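(* Let $P_0=(|P_0|,\preccurlyeq_0)$ be a finite poset with $|P_0|=\{x_1,\dots,x_{m_0}\}$ and let $S\subseteq|P_0|$. Fix nonnegative integer values of $m_i$ for all $i$ with $x_i\notin S$, and consider $L_+(P_0;m_1,\dots,m_{m_0})$ as a function of the remaining variables $(m_i)_{x_i\in S}$ ranging over nonnegative integers. If $S$ is a chain in $P_0$, then (for every choice of the fixed values) this function is given by a polynomial with rational coefficients in the variables $(m_i)_{x_i\in S}$; if $S$ is not a chain, then (for every choice of the fixed values) it is not given by any such polynomial.
   Context: For nonnegative integers $m_1,\dots,m_{m_0}$ let $C_1,\dots,C_{m_0}$ be pairwise disjoint chains, $C_i$ being $x_{i,1}<\dots<x_{i,m_i}$. The lexicographic sum $P=P_0*(C_1,\dots,C_{m_0})$ is the poset on $\bigcup_i|C_i|$ with $x_{i,j}\preccurlyeq x_{i',j'}$ iff either $i\ne i'$ and $x_i\preccurlyeq_0x_{i'}$, or $i=i'$ and $j\le j'$. $L_+(P_0;m_1,\dots,m_{m_0})$ is the number of linearizations (total orders refining $\preccurlyeq$) of $P$. *)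

From HB Require Import structures.
From mathcomp Require Import all_boot all_order all_algebra.
Set Implicit Arguments. Unset Strict Implicit. Unset Printing Implicit Defensive.
Import GRing.Theory Num.Theory.

Definition is_partial_order (T : finType) (le : rel T) : Prop :=
  reflexive le /\ antisymmetric le /\ transitive le.

Definition is_chain (T : finType) (le : rel T) (S : {set T}) : Prop :=
  forall x y, x \in S -> y \in S -> le x y || le y x.

(* Ground set of the lexicographic sum P0 * (C_1,...,C_m0): the element
   (i, j) stands for x_{i, j+1}, the (j+1)-th element of the chain C_i. *)
Definition lexsum_carrier (m0 : nat) (m : 'I_m0 -> nat) : finType :=
  {i : 'I_m0 & 'I_(m i)}.

Definition lexsum_le (m0 : nat) (le0 : rel 'I_m0) (m : 'I_m0 -> nat)
    (x y : lexsum_carrier m) : bool :=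
  ((tag x != tag y) && le0 (tag x) (tag y))
  || ((tag x == tag y) && (nat_of_ord (tagged x) <= nat_of_ord (tagged y))).

Definition is_linearization (T : finType) (le : rel T) (R : {set T * T}) : bool :=
  [&& [forall x, (x, x) \in R],
      [forall x, forall y, ((x, y) \in R) && ((y, x) \in R) ==> (x == y)],
      [forall x, forall y, forall z, ((x, y) \in R) && ((y, z) \in R) ==> ((x, z) \in R)],
      [forall x, forall y, ((x, y) \in R) || ((y, x) \in R)] &
      [forall x, forall y, le x y ==> ((x, y) \in R)]].

Definition Lplus (m0 : nat) (le0 : rel 'I_m0) (m : 'I_m0 -> nat) : nat :=
  #|[pred R : {set lexsum_carrier m * lexsum_carrier m} |
      is_linearization (@lexsum_le m0 le0 m) R]|.

(* A polynomial with rational coefficients in the variables (m_i)_{i in S}: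
   coefficients c indexed by exponent vectors e with entries < d.+1;
   only the variables with index in S occur. *)
Definition poly_eval (m0 : nat) (S : {set 'I_m0}) (d : nat)
    (c : {ffun {ffun 'I_m0 -> 'I_d.+1} -> rat}) (m : 'I_m0 -> nat) : rat :=
  \sum_(e : {ffun 'I_m0 -> 'I_d.+1})
     c e * \prod_(i in S) ((m i)%:R ^+ (e i : nat)).

Definition Lplus_polynomial_in (m0 : nat) (le0 : rel 'I_m0) (S : {set 'I_m0})
    (mfix : 'I_m0 -> nat) : Prop :=
  exists (d : nat) (c : {ffun {ffun 'I_m0 -> 'I_d.+1} -> rat}),
    forall m : 'I_m0 -> nat,
      (forall i, i \notin S -> m i = mfix i) ->
      ((Lplus le0 m)%:R : rat) = poly_eval S c m.

From HB Require Import structures.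
From mathcomp Require Import all_boot all_order all_algebra.
From mathcomp Require Import zify ring.
From Stdlib Require Import FunctionalExtensionality.
Set Implicit Arguments. Unset Strict Implicit. Unset Printing Implicit Defensive.
Import Order.TTheory GRing.Theory Num.Theory.

(* Deleting the top element of a linearization of P = P0 * (C_1, ..., C_m0) leaves a
   linearization of the lexicographic sum in which the maximal nonempty chain C_i has lost its
   last element, whence L_+(m) = sum of L_+(m - e_i) over the maximal nonempty blocks i.
   Varying one m_s with the other m_j fixed, this recursion shows that k |-> L_+(m[s := k])
   has vanishing finite differences of order 1 + (total size of the blocks incomparable with
   x_s).  When S is a chain those blocks lie outside S, so the bound is uniform in the
   variables of S and Newton's forward-difference formula, applied one variable at a time,
   writes L_+ as a polynomial.  If x_p, x_q in S are incomparable, the same recursion gives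
   L_+(m) >= binomial(m_p + m_q, m_q), which for m_q = E + 1 and m_p = n grows like n^(E+1),
   faster than any polynomial of total degree E. *)

Section Linearizations.
Variables (T : finType) (le : rel T).

Definition set_rel (R : {set T * T}) : rel T := fun x y => (x, y) \in R.

Lemma linearizationP (R : {set T * T}) :
  is_linearization le R <->
  [/\ reflexive (set_rel R), antisymmetric (set_rel R), transitive (set_rel R),
      total (set_rel R) & subrel le (set_rel R)].
Proof.
split.
- case/and5P=> /forallP refl /'forall_forallP anti /'forall_'forall_forallP trans
    /'forall_forallP tot /'forall_forallP sub.
  split=> // [x y /andP[xy yx] | y x z xy yz | x y /(implyP (sub x y))//].
    exact/eqP/(implyP (anti x y))/andP.
  exact: (implyP (trans x y z)) (introT andP (conj xy yz)).
- case=> refl anti trans tot sub; apply/and5P; split.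
  + by apply/forallP=> x; apply: refl.
  + by do 2 apply/forallP=> ?; apply/implyP=> /anti ->.
  + by do 3 apply/forallP=> ?; apply/implyP=> /andP[xy /(trans _ _ _ xy)].
  + by apply/forallP=> x; apply/forallP=> y; apply: tot.
  + by do 2 apply/forallP=> ?; apply/implyP=> /sub.
Qed.

Definition is_top (R : {set T * T}) t := [forall y, (y, t) \in R].
Definition maximal t := [forall y, le t y ==> (y == t)].

Lemma linearization_top R : is_linearization le R -> T -> {t | is_top R t}.
Proof.
case/linearizationP=> refl _ trans tot _ x0.
pose below t := #|[set y | (y, t) \in R]|.
have [t _ t_max] := @arg_maxnP T x0 predT below isT.
exists t; apply/forallP=> y; apply: contraT => yt.
have ty : (t, y) \in R by move: (tot t y); rewrite /set_rel (negbTE yt) orbF.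
suff : below t < below y by have := t_max y isT; rewrite /= leqNgt => /negP.
apply/proper_card/properP; split.
  by apply/subsetP=> z; rewrite !inE => /trans; apply.
by exists y; rewrite !inE ?yt //; apply: refl.
Qed.

Lemma top_maximal R t : is_linearization le R -> is_top R t -> maximal t.
Proof.
case/linearizationP=> _ anti _ _ sub /forallP top; apply/forallP=> y.
by apply/implyP=> /sub ty; apply/eqP/anti; rewrite ty andbT; apply: top.
Qed.

Lemma top_unique R t u : is_linearization le R -> is_top R t -> is_top R u -> t = u.
Proof.
by case/linearizationP=> _ anti _ _ _ /forallP tt /forallP tu; apply: anti; rewrite /set_rel tu tt.
Qed.

Lemma card_linearizations_by_top : T ->
  #|[pred R | is_linearization le R]| =
  \sum_(t | maximal t) #|[pred R | is_linearization le R && is_top R t]|.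
Proof.
move=> x0; rewrite -sum1_card.
under [RHS]eq_bigr do rewrite -sum1_card.
rewrite (exchange_big_dep (fun R => is_linearization le R)) /=; last by move=> t R _ /andP[].
apply: eq_bigr => R; rewrite inE => linR; have [t top_t] := linearization_top linR x0.
rewrite (big_pred1 t) // => u /=; rewrite inE linR /=.
apply/idP/eqP => [/andP[_ top_u] | ->]; first exact: top_unique top_u top_t.
by rewrite top_t (top_maximal linR top_t).
Qed.

End Linearizations.

Section RemoveTop.
Variables (T T' : finType) (le : rel T) (le' : rel T') (phi : T' -> T) (t : T).
Hypothesis phi_inj : injective phi.
Hypothesis phi_neq : forall a, phi a != t.
Hypothesis phi_onto : forall x, x != t -> exists a, x = phi a.
Hypothesis phi_le : forall a b, le' a b = le (phi a) (phi b).
Hypothesis t_maximal : maximal le t.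

Let phi2 (p : T' * T') := (phi p.1, phi p.2).

Let phi2_inj : injective phi2.
Proof. by case=> a b [c d] [/phi_inj -> /phi_inj ->]. Qed.

Let split_t x : x = t \/ exists a, x = phi a.
Proof. by have [->|/phi_onto] := eqVneq x t; [left | right]. Qed.

Definition restrict_lin (R : {set T * T}) : {set T' * T'} := [set p | phi2 p \in R].
Definition extend_lin (R' : {set T' * T'}) : {set T * T} :=
  [set (x, t) | x : T] :|: phi2 @: R'.

Lemma extend_lin_phi R' a b : ((phi a, phi b) \in extend_lin R') = ((a, b) \in R').
Proof.
rewrite -[(phi a, phi b)]/(phi2 (a, b)) in_setU (mem_imset _ _ phi2_inj); case: imsetP => //=.
by case=> x _ [_ /eqP]; rewrite (negbTE (phi_neq b)).
Qed.

Lemma extend_lin_to_t R' x : (x, t) \in extend_lin R'.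
Proof. by rewrite in_setU imset_f. Qed.

Lemma extend_lin_from_t R' a : ((t, phi a) \in extend_lin R') = false.
Proof.
rewrite in_setU; apply/negbTE; rewrite negb_or; apply/andP; split.
  by apply/imsetP=> -[x _ [_ /eqP]]; rewrite (negbTE (phi_neq a)).
by apply/imsetP=> -[[c d] _ [/eqP]]; rewrite eq_sym (negbTE (phi_neq c)).
Qed.

Lemma restrict_linearization R :
  is_linearization le R -> is_linearization le' (restrict_lin R).
Proof.
case/linearizationP=> refl anti trans tot sub; apply/linearizationP; rewrite /set_rel; split.
- by move=> a; rewrite inE; apply: refl.
- by move=> a b; rewrite !inE => /anti /phi_inj.
- by move=> b a c; rewrite !inE; apply: trans.
- by move=> a b; rewrite !inE; apply: tot.
- by move=> a b; rewrite phi_le inE; apply: sub.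
Qed.

Lemma extend_linearization R' : is_linearization le' R' ->
  is_linearization le (extend_lin R') && is_top (extend_lin R') t.
Proof.
case/linearizationP=> refl anti trans tot sub.
rewrite /is_top; apply/andP; split; last exact/forallP/extend_lin_to_t.
apply/linearizationP; rewrite /set_rel; split.
- move=> x; case: (split_t x) => [->|[a ->]]; first exact: extend_lin_to_t.
  by rewrite extend_lin_phi; apply: refl.
- move=> x y; case: (split_t x) => [->|[a ->]]; case: (split_t y) => [->|[b ->]] //;
    rewrite ?extend_lin_from_t ?andbF //.
  by rewrite !extend_lin_phi => /anti ->.
- move=> y x z; case: (split_t z) => [->|[c ->]]; rewrite ?extend_lin_to_t //.
  case: (split_t y) => [->|[b ->]]; rewrite ?extend_lin_from_t ?andbF //.
  case: (split_t x) => [->|[a ->]]; rewrite ?extend_lin_from_t // !extend_lin_phi.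
  exact: trans.
- move=> x y; case: (split_t y) => [->|[b ->]]; rewrite ?extend_lin_to_t //.
  case: (split_t x) => [->|[a ->]]; rewrite ?extend_lin_to_t ?orbT //.
  by rewrite !extend_lin_phi; apply: tot.
- move=> x y; case: (split_t y) => [->|[b ->]]; rewrite ?extend_lin_to_t //.
  case: (split_t x) => [-> /(implyP (forallP t_maximal _)) /eqP tb | [a ->]].
    by move: (phi_neq b); rewrite tb eqxx.
  by rewrite -phi_le extend_lin_phi; apply: sub.
Qed.

Lemma restrict_extend_lin R' : restrict_lin (extend_lin R') = R'.
Proof. by apply/setP=> -[a b]; rewrite inE extend_lin_phi. Qed.

Lemma restrict_lin_inj :
  {in [pred R | is_linearization le R && is_top R t] &, injective restrict_lin}.
Proof.
move=> R1 R2; rewrite !inE => /andP[/linearizationP[_ anti1 _ _ _] /forallP top1]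
  /andP[/linearizationP[_ anti2 _ _ _] /forallP top2] /setP eqR.
apply/setP=> -[x y]; case: (split_t y) => [->|[b ->]]; first by rewrite top1 top2.
case: (split_t x) => [->|[a ->]]; last by move: (eqR (a, b)); rewrite !inE.
have notin (R : {set T * T}) : antisymmetric (set_rel R) -> (forall z, (z, t) \in R) ->
    (t, phi b) \notin R.
  move=> anti top; apply/negP=> tb; move: (phi_neq b).
  by rewrite (anti _ _ (introT andP (conj tb (top _)))) eqxx.
by rewrite (negbTE (notin _ anti1 top1)) (negbTE (notin _ anti2 top2)).
Qed.

Lemma card_linearizations_remove_top :
  #|[pred R | is_linearization le R && is_top R t]| = #|[pred R' | is_linearization le' R']|.
Proof.
rewrite -(card_in_imset restrict_lin_inj); apply: eq_card => R'; rewrite inE.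
apply/imsetP/idP => [[R] | linR'].
  by rewrite inE => /andP[linR _] ->; apply: restrict_linearization.
by exists (extend_lin R'); rewrite ?inE ?extend_linearization ?restrict_extend_lin.
Qed.

End RemoveTop.

Section Updates.
Variable m0 : nat.
Implicit Types (m : 'I_m0 -> nat) (i j s t : 'I_m0).

Definition upd m s n : 'I_m0 -> nat := fun j => if j == s then n else m j.
Definition decr m i := upd m i (m i).-1.

Lemma upd_eq m s n : upd m s n s = n.
Proof. by rewrite /upd eqxx. Qed.

Lemma upd_neq m s n j : j != s -> upd m s n j = m j.
Proof. by rewrite /upd => /negbTE ->. Qed.

Lemma upd_id m s : upd m s (m s) = m.
Proof. by apply: functional_extensionality => j; rewrite /upd; case: eqP => [->|]. Qed.

Lemma upd_upd m s a b : upd (upd m s a) s b = upd m s b.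
Proof. by apply: functional_extensionality => j; rewrite /upd; case: eqP. Qed.

Lemma upd_comm m s t a b : s != t -> upd (upd m s a) t b = upd (upd m t b) s a.
Proof.
move=> st; apply: functional_extensionality => j; rewrite /upd.
by case: (eqVneq j t) => // ->; rewrite eq_sym (negbTE st).
Qed.

Lemma decr_le m i j : decr m i j <= m j.
Proof. by rewrite /decr /upd; case: eqP => [->|]; rewrite ?leq_pred. Qed.

Lemma decr_upd_neq m s n i : i != s -> decr (upd m s n) i = upd (decr m i) s n.
Proof. by move=> i_s; rewrite /decr upd_neq // upd_comm // eq_sym. Qed.

Lemma decr_upd_eq m s n : decr (upd m s n.+1) s = upd m s n.
Proof. by rewrite /decr upd_eq upd_upd. Qed.

End Updates.

Section LexicographicSum.
Variables (m0 : nat) (le0 : rel 'I_m0).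
Implicit Types (m : 'I_m0 -> nat) (i j s : 'I_m0).
Local Notation lexle m := (@lexsum_le m0 le0 m).

Definition maximal_block m i :=
  (0 < m i) && [forall j, (0 < m j) && (j != i) ==> ~~ le0 i j].

Lemma eq_tagged_ord m (x y : lexsum_carrier m) :
  tag x = tag y -> (tagged x : nat) = tagged y -> x = y.
Proof. by case: x => i a; case: y => j b /= eij; subst j => /val_inj ->. Qed.

Lemma maximal_block_support m m' i : (forall j, (0 < m j) = (0 < m' j)) ->
  maximal_block m i = maximal_block m' i.
Proof.
by move=> supp; rewrite /maximal_block supp; congr (_ && _); apply: eq_forallb => j; rewrite supp.
Qed.

Lemma maximal_lexsum m (x : lexsum_carrier m) :
  maximal (lexle m) x =
  ((tagged x : nat) == (m (tag x)).-1) && maximal_block m (tag x).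
Proof.
apply/forallP/andP.
- move=> x_max; have above y : lexsum_le le0 x y -> y = x by move/(implyP (x_max y))/eqP.
  case: x {x_max} above => i k /= above; have k_lt := ltn_ord k; split.
    apply/eqP; apply: contraTeq isT => k_nlast; have k1_lt : k.+1 < m i by lia.
    have := above (existT _ i (Ordinal k1_lt)).
    rewrite /lexsum_le /= eqxx leqnSn orbT => /(_ isT).
    by move/(congr1 (fun y : lexsum_carrier m => tagged y : nat)) => /=; lia.
  apply/andP; split; first exact: leq_ltn_trans k_lt.
  apply/forallP=> j; apply/implyP=> /andP[mj_gt0 ji]; apply/negP=> ij.
  have := above (existT _ j (Ordinal mj_gt0)); rewrite /lexsum_le /= eq_sym ji ij => /(_ isT).
  by move/(congr1 (fun y : lexsum_carrier m => tag y)) => /= /eqP; rewrite (negbTE ji).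
- case: x => i k /= [/eqP k_last /andP[_ /forallP blk]] [j l].
  apply/implyP; rewrite /lexsum_le /=.
  case/orP=> [/andP[ij i_le_j] | /andP[/eqP eij]].
    by move: (blk j); rewrite eq_sym ij i_le_j (leq_ltn_trans _ (ltn_ord l)).
  subst j => kl; apply/eqP/eq_tagged_ord => //=; have := ltn_ord l; lia.
Qed.

Definition lexsum_decr m i (x : lexsum_carrier (decr m i)) : lexsum_carrier m :=
  existT (fun j => 'I_(m j)) (tag x) (widen_ord (decr_le m i (tag x)) (tagged x)).

Lemma card_linearizations_top_lexsum m (x : lexsum_carrier m) :
  maximal (lexle m) x ->
  #|[pred R | is_linearization (lexle m) R && is_top R x]| = Lplus le0 (decr m (tag x)).
Proof.
move=> x_max; have := x_max; rewrite maximal_lexsum => /andP[/eqP x_last _].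
case: x x_max x_last => i k /= x_max k_last.
have decr_i : decr m i i = (m i).-1 by rewrite /decr /upd eqxx.
apply: (card_linearizations_remove_top (phi := lexsum_decr (i := i))) => //.
- move=> y z /[dup] /(congr1 (fun y : lexsum_carrier m => tag y)) /= eq_tag.
  by move/(congr1 (fun y : lexsum_carrier m => tagged y : nat)) => /=; apply: eq_tagged_ord.
- case=> j l; apply/negP => /eqP eq_x.
  have eij := congr1 (fun y : lexsum_carrier m => tag y) eq_x; simpl in eij; subst j.
  have /= := congr1 (fun y : lexsum_carrier m => tagged y : nat) eq_x.
  have : (l : nat) < (m i).-1 by rewrite -decr_i ltn_ord.
  lia.
- case=> j l ne_x; have l_lt : l < decr m i j.
    rewrite /decr /upd; case: eqP => [eji|]; last by rewrite ltn_ord.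
    subst j; have l_ne : (l : nat) != k by apply: contraNneq ne_x => lk; apply/eqP/eq_tagged_ord.
    by have := ltn_ord l; rewrite -k_last; lia.
  by exists (existT _ j (Ordinal l_lt)); apply: eq_tagged_ord.
Qed.

Lemma Lplus_rec m : (exists i, 0 < m i) ->
  Lplus le0 m = \sum_(i | maximal_block m i) Lplus le0 (decr m i).
Proof.
case=> i0 m_i0; pose x0 : lexsum_carrier m := existT _ i0 (Ordinal m_i0).
rewrite /Lplus (card_linearizations_by_top _ x0).
under eq_bigr => x /card_linearizations_top_lexsum -> do [].
rewrite (partition_big (fun x : lexsum_carrier m => tag x) (maximal_block m)); last first.
  by move=> x; rewrite maximal_lexsum => /andP[].
apply: eq_bigr => i blk_i; have last_lt : (m i).-1 < m i by case/andP: blk_i => /prednK {2}<-.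
rewrite (big_pred1 (existT _ i (Ordinal last_lt))) // => x /=; rewrite maximal_lexsum.
apply/idP/eqP => [/andP[/andP[/eqP x_last _] /eqP xi] | ->]; last by rewrite /= !eqxx blk_i.
by apply: eq_tagged_ord => //=; rewrite x_last xi.
Qed.

Lemma Lplus_empty m : (forall i, m i = 0) -> Lplus le0 m = 1.
Proof.
move=> m0_eq; have no_elt (x : lexsum_carrier m) : False.
  by case: x => i k; have := ltn_ord k; rewrite [X in _ < X]m0_eq.
rewrite /Lplus -(card1 (set0 : {set lexsum_carrier m * lexsum_carrier m})).
apply: eq_card => R; rewrite !inE.
have -> : R = set0 by apply/setP=> -[x y]; case: (no_elt x).
by rewrite eqxx; apply/linearizationP; split=> x; case: (no_elt x).
Qed.

End LexicographicSum.

Section FiniteDifferences.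
Local Open Scope ring_scope.
Variable V : zmodType.
Implicit Types (f g h : nat -> V) (k n : nat).

Definition delta g : nat -> V := fun n => g n.+1 - g n.
Definition delta_vanishes k g := forall n, iter k delta g n = 0.

Lemma iter_delta_ext f g : f =1 g -> forall k, iter k delta f =1 iter k delta g.
Proof. by move=> fg; elim=> //= k IH n; rewrite /delta !IH. Qed.

Lemma iter_delta_shift f k n : iter k delta (fun n => f n.+1) n = iter k delta f n.+1.
Proof. by elim: k n => //= k IH n; rewrite /delta !IH. Qed.

Lemma iter_delta_sum (I : finType) (P : pred I) (F : I -> nat -> V) k n :
  iter k delta (fun n => \sum_(i | P i) F i n) n = \sum_(i | P i) iter k delta (F i) n.
Proof. by elim: k n => //= k IH n; rewrite /delta !IH sumrB. Qed.

Lemma delta_vanishes_ext k f g : f =1 g -> delta_vanishes k f -> delta_vanishes k g.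
Proof. by move=> fg f0 n; rewrite -(iter_delta_ext fg). Qed.

Lemma delta_vanishes_le k l g : (k <= l)%N -> delta_vanishes k g -> delta_vanishes l g.
Proof.
move=> kl g0 n; rewrite -(subnK kl) iterD.
by elim: (l - k)%N n => [|i IH] n; rewrite /= ?g0 // /delta !IH subrr.
Qed.

Lemma delta_vanishes_sum (I : finType) (P : pred I) (F : I -> nat -> V) k :
  (forall i, P i -> delta_vanishes k (F i)) ->
  delta_vanishes k (fun n => \sum_(i | P i) F i n).
Proof. by move=> F0 n; rewrite iter_delta_sum big1 // => i /F0. Qed.

Lemma delta_vanishes_succ k g h :
  delta_vanishes k h -> (forall n, g n.+1 = g n + h n.+1) -> delta_vanishes k.+1 g.
Proof.
move=> h0 gS n; rewrite iterSr (@iter_delta_ext _ (fun n => h n.+1)) ?iter_delta_shift //.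
by move=> j; rewrite /delta gS addrC addKr.
Qed.

Lemma pascal_sum (b : nat -> V) n :
  \sum_(j < n.+1) b j *+ 'C(n, j) + \sum_(j < n.+1) b j.+1 *+ 'C(n, j) =
  \sum_(j < n.+2) b j *+ 'C(n.+1, j).
Proof.
rewrite [RHS]big_ord_recl.
under [in RHS]eq_bigr do rewrite lift0 binS mulrnDr.
rewrite big_split /= [X in X + _ = _]big_ord_recl.
under [in X in X + _ = _]eq_bigr do rewrite lift0.
rewrite [X in _ = _ + (X + _)]big_ord_recr /= (bin_small (ltnSn n)) !bin0.
by rewrite mulr0n addr0 addrA.
Qed.

Lemma newton_forward g n k :
  iter k delta g n = \sum_(j < n.+1) iter (j + k) delta g 0 *+ 'C(n, j).
Proof.
elim: n k => [|n IH] k; first by rewrite big_ord1.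
have -> : iter k delta g n.+1 = iter k delta g n + iter k.+1 delta g n.
  by rewrite /= /delta addrC subrK.
rewrite !IH -(pascal_sum (fun j => iter (j + k) delta g 0)); congr (_ + _).
by apply: eq_bigr => j _; rewrite addSn addnS.
Qed.

Lemma big_ord_widen0 (F : nat -> V) a b : (a <= b)%N ->
  (forall j, (a <= j)%N -> F j = 0) -> \sum_(j < a) F j = \sum_(j < b) F j.
Proof.
move=> ab F0; rewrite (big_ord_widen b F ab) big_mkcond; apply: eq_bigr => j _.
by case: ltnP => // /F0 ->.
Qed.

Lemma newton_forward_vanishes k g : delta_vanishes k g ->
  forall n, g n = \sum_(j < k) iter j delta g 0 *+ 'C(n, j).
Proof.
move=> g0 n; have := newton_forward g n 0; rewrite /= => ->.
under eq_bigr do rewrite addn0.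
pose F j := iter j delta g 0 *+ 'C(n, j).
rewrite (@big_ord_widen0 F n.+1 (n.+1 + k)) ?leq_addr //; last first.
  by move=> j /bin_small; rewrite /F => ->.
rewrite (@big_ord_widen0 F k (n.+1 + k)) ?leq_addl //.
by move=> j kj; rewrite /F (delta_vanishes_le kj g0) mul0rn.
Qed.

End FiniteDifferences.

Arguments delta {V} g n.

Section SingleVariable.
Variables (m0 : nat) (le0 : rel 'I_m0).
Hypotheses (le0_anti : antisymmetric le0) (le0_trans : transitive le0).
Variable s : 'I_m0.
Implicit Types (m : 'I_m0 -> nat) (i j : 'I_m0).

(* These do not depend on [m s]: [upd m s 1] only makes the block of [s] nonempty. *)
Definition top_s m := maximal_block le0 (upd m s 1) s.
Definition top_other m i := (i != s) && maximal_block le0 (upd m s 1) i.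

Definition incomparable_mass m := (\sum_(j | ~~ le0 j s && ~~ le0 s j) m j)%N.
Definition mass_off_s m := (\sum_(j | j != s) m j)%N.

Lemma maximal_block_upd_succ m n i :
  maximal_block le0 (upd m s n.+1) i = maximal_block le0 (upd m s 1) i.
Proof. by apply: maximal_block_support => j; rewrite /upd; case: eqP. Qed.

Lemma Lplus_upd_succ m n : Lplus le0 (upd m s n.+1) =
  ((if top_s m then Lplus le0 (upd m s n) else 0) +
   \sum_(i | top_other m i) Lplus le0 (upd (decr m i) s n.+1))%N.
Proof.
rewrite Lplus_rec; last by exists s; rewrite upd_eq.
rewrite big_mkcond (bigD1 s) //= maximal_block_upd_succ decr_upd_eq; congr (_ + _)%N.
rewrite /top_other big_mkcondr; apply: eq_bigr => i si.
by rewrite maximal_block_upd_succ decr_upd_neq.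
Qed.

Lemma top_other_not_below_s m i : top_other m i -> ~~ le0 i s.
Proof.
by case/andP=> si /andP[_ /forallP/(_ s)]; rewrite upd_eq eq_sym si.
Qed.

Lemma not_top_s m : ~~ top_s m -> exists j, [&& 0 < m j, j != s & le0 s j].
Proof.
rewrite /top_s /maximal_block upd_eq /= => /forallPn[j].
rewrite negb_imply negbK => /andP[/andP[mj js] sj]; rewrite upd_neq // in mj.
by exists j; rewrite mj js sj.
Qed.

Lemma maximal_block_upd_zero m i : ~~ top_s m -> i != s ->
  maximal_block le0 (upd m s 0) i = maximal_block le0 (upd m s 1) i.
Proof.
case/not_top_s=> j0 /and3P[mj0 j0s s_j0] i_s; rewrite /maximal_block !upd_neq //.
congr (_ && _); apply/forallP/forallP => blk j.
  case: (eqVneq j s) => [->|js]; last by have := blk j; rewrite !upd_neq.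
  rewrite upd_eq eq_sym i_s /=; apply/negP=> i_le_s.
  have j0i : j0 != i.
    by apply: contraNneq i_s => ji; apply/eqP/le0_anti; rewrite i_le_s -ji s_j0.
  by have := blk j0; rewrite upd_neq // mj0 j0i (le0_trans i_le_s s_j0).
case: (eqVneq j s) => [->|js]; first by rewrite upd_eq.
by have := blk j; rewrite !upd_neq.
Qed.

Lemma Lplus_upd_zero m : ~~ top_s m ->
  Lplus le0 (upd m s 0) = (\sum_(i | top_other m i) Lplus le0 (upd (decr m i) s 0))%N.
Proof.
move=> not_top; have [j0 /and3P[mj0 j0s _]] := not_top_s not_top.
rewrite Lplus_rec; last by exists j0; rewrite upd_neq.
rewrite big_mkcond (bigD1 s) //= {1}/maximal_block upd_eq /= add0n.
rewrite /top_other big_mkcondr; apply: eq_bigr => i si.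
by rewrite maximal_block_upd_zero // decr_upd_neq.
Qed.

Lemma top_other_pos m i : top_other m i -> 0 < m i.
Proof. by case/andP=> si /andP[]; rewrite upd_neq. Qed.

Lemma incomparable_mass_decr_le m i :
  incomparable_mass (decr m i) <= incomparable_mass m.
Proof. by apply: leq_sum => j _; apply: decr_le. Qed.

Lemma incomparable_mass_decr m i : top_s m -> top_other m i ->
  (incomparable_mass (decr m i)).+1 = incomparable_mass m.
Proof.
move=> top oi; have m_i := top_other_pos oi; have i_s := top_other_not_below_s oi.
have s_i : ~~ le0 s i.
  move: top => /andP[_ /forallP/(_ i)]; case/andP: oi => si _.
  by rewrite upd_neq // m_i si.
rewrite /incomparable_mass (bigD1 i) ?i_s ?s_i //= [RHS](bigD1 i) ?i_s ?s_i //=.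
rewrite -addSn {1}/decr upd_eq prednK //; congr (_ + _)%N.
by apply: eq_bigr => j /andP[_ ji]; rewrite /decr upd_neq.
Qed.

Lemma mass_off_s_decr m i : top_other m i -> mass_off_s (decr m i) < mass_off_s m.
Proof.
move=> oi; have m_i := top_other_pos oi; case/andP: oi => si _.
rewrite /mass_off_s (bigD1 i) //= [X in _ < X](bigD1 i) //= {1}/decr upd_eq.
rewrite (eq_bigr m) => [|j /andP[_ ji]]; last by rewrite /decr upd_neq.
by rewrite ltn_add2r ltn_predL.
Qed.

Definition Lplus_along m n : rat := (Lplus le0 (upd m s n))%:R.

(* Along [s], the recursion of [Lplus_rec] either lowers [m s] (when [s] is a maximal block),
   which yields a difference, or removes the top of another maximal block [i]; when [s] is
   maximal such an [i] is incomparable with [s], so every difference step uses up one unit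
   of incomparable mass. *)

Lemma delta_vanishes_Lplus_along m :
  delta_vanishes (incomparable_mass m).+1 (Lplus_along m).
Proof.
elim: (mass_off_s m).+1 {-2}m (ltnSn (mass_off_s m)) => // w IH {}m mw.
have IHi i : top_other m i ->
    delta_vanishes (incomparable_mass (decr m i)).+1 (Lplus_along (decr m i)).
  by move=> oi; apply: IH; apply: leq_trans (mass_off_s_decr oi) _.
pose h n := (\sum_(i | top_other m i) Lplus_along (decr m i) n)%R.
have [top|not_top] := boolP (top_s m).
  apply: (@delta_vanishes_succ _ _ _ h).
    by apply: delta_vanishes_sum => i oi; rewrite -(incomparable_mass_decr top oi); apply: IHi.
  by move=> n; rewrite /Lplus_along Lplus_upd_succ top natrD natr_sum.
apply: (@delta_vanishes_ext _ _ h).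
  case=> [|n]; rewrite /h /Lplus_along; first by rewrite Lplus_upd_zero // natr_sum.
  by rewrite Lplus_upd_succ (negbTE not_top) add0n natr_sum.
apply: delta_vanishes_sum => i oi; apply: delta_vanishes_le (IHi i oi).
by rewrite ltnS incomparable_mass_decr_le.
Qed.

End SingleVariable.

Lemma iter_commute (A : Type) (f g : A -> A) : f \o g =1 g \o f ->
  forall a b x, iter a f (iter b g x) = iter b g (iter a f x).
Proof.
move=> fg; have fgb b x : f (iter b g x) = iter b g (f x).
  by elim: b x => //= b IH x; rewrite -IH; apply: fg.
by elim=> //= a IH b x; rewrite IH fgb.
Qed.

Section PolynomialFunctions.
Local Open Scope ring_scope.

Lemma natr_ffact (R : nzRingType) n j :
  (n ^_ j)%:R = \prod_(i < j) (n%:R - i%:R) :> R.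
Proof.
elim: j => [|j IH]; first by rewrite ffactn0 big_ord0.
rewrite ffactnSr natrM IH big_ord_recr /=.
by case: (leqP j n) => [jn|nj]; [rewrite natrB | rewrite -IH ffact_small // !mul0r].
Qed.

Lemma natr_bin (F : numFieldType) n j :
  'C(n, j)%:R = (\prod_(i < j) (n%:R - i%:R)) / j`!%:R :> F.
Proof. by rewrite -natr_ffact -bin_ffact natrM mulfK // pnatr_eq0 -lt0n fact_gt0. Qed.

Variables (m0 : nat) (S : {set 'I_m0}).
Implicit Types (F G : ('I_m0 -> nat) -> rat) (d : nat).

Definition is_polyfun_deg d F :=
  exists c : {ffun {ffun 'I_m0 -> 'I_d.+1} -> rat}, forall m, F m = poly_eval S c m.
Definition is_polyfun F := exists d, is_polyfun_deg d F.

Lemma is_polyfun_deg_ext d F G : F =1 G -> is_polyfun_deg d F -> is_polyfun_deg d G.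
Proof. by move=> FG [c Fc]; exists c => m; rewrite -FG. Qed.

Lemma is_polyfun_ext F G : F =1 G -> is_polyfun F -> is_polyfun G.
Proof. by move=> FG [d Fd]; exists d; apply: is_polyfun_deg_ext Fd. Qed.

Lemma is_polyfun_deg_const d a : is_polyfun_deg d (fun _ => a).
Proof.
pose e0 : {ffun 'I_m0 -> 'I_d.+1} := [ffun _ => ord0].
exists [ffun e => if e == e0 then a else 0] => m.
rewrite /poly_eval (bigD1 e0) //= [X in _ = _ + X]big1 => [|e /negbTE e_ne]; last first.
  by rewrite ffunE e_ne mul0r.
by rewrite ffunE eqxx addr0 big1 ?mulr1 // => i _; rewrite ffunE expr0.
Qed.

Lemma is_polyfun_const a : is_polyfun (fun _ => a).
Proof. by exists 0%N; apply: is_polyfun_deg_const. Qed.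

Lemma is_polyfun_var s : s \in S -> is_polyfun (fun m => (m s)%:R).
Proof.
move=> sS; exists 1%N.
pose e1 : {ffun 'I_m0 -> 'I_2} := [ffun i => if i == s then ord_max else ord0].
exists [ffun e => if e == e1 then 1 else 0] => m.
rewrite /poly_eval (bigD1 e1) //= [X in _ = _ + X]big1 => [|e /negbTE e_ne]; last first.
  by rewrite ffunE e_ne mul0r.
rewrite ffunE eqxx mul1r addr0 (bigD1 s) //= ffunE eqxx expr1 big1 ?mulr1 //.
by move=> i /andP[_ /negbTE i_s]; rewrite ffunE i_s expr0.
Qed.

Lemma is_polyfun_deg_add d F G :
  is_polyfun_deg d F -> is_polyfun_deg d G -> is_polyfun_deg d (fun m => F m + G m).
Proof.
move=> [cF Fc] [cG Gc]; exists [ffun e => cF e + cG e] => m.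
by rewrite Fc Gc /poly_eval -big_split; apply: eq_bigr => e _; rewrite ffunE mulrDl.
Qed.

Lemma is_polyfun_deg_mul d1 d2 F G : is_polyfun_deg d1 F -> is_polyfun_deg d2 G ->
  is_polyfun_deg (d1 + d2) (fun m => F m * G m).
Proof.
move=> [c1 Fc] [c2 Gc].
pose add_exp (e1 : {ffun 'I_m0 -> 'I_d1.+1}) (e2 : {ffun 'I_m0 -> 'I_d2.+1}) :
  {ffun 'I_m0 -> 'I_(d1 + d2).+1} := [ffun i => inord (e1 i + e2 i)].
exists [ffun e => \sum_e1 \sum_(e2 | add_exp e1 e2 == e) c1 e1 * c2 e2] => m.
rewrite Fc Gc /poly_eval mulr_suml.
under [RHS]eq_bigr do rewrite ffunE mulr_suml.
rewrite [RHS]exchange_big /=; apply: eq_bigr => e1 _.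
under [RHS]eq_bigr do rewrite mulr_suml.
rewrite mulr_sumr [RHS](exchange_big_dep predT) //=; apply: eq_bigr => e2 _.
rewrite (big_pred1 (add_exp e1 e2)) => [|e]; last by rewrite /= eq_sym.
rewrite mulrACA -big_split /=; congr (_ * _); apply: eq_bigr => i _.
by rewrite ffunE inordK ?exprD // ltnS leq_add // -ltnS ltn_ord.
Qed.

Lemma is_polyfun_mul F G : is_polyfun F -> is_polyfun G -> is_polyfun (fun m => F m * G m).
Proof. by move=> [d1 Fd] [d2 Gd]; exists (d1 + d2)%N; apply: is_polyfun_deg_mul. Qed.

Lemma is_polyfun_add F G : is_polyfun F -> is_polyfun G -> is_polyfun (fun m => F m + G m).
Proof.
move=> [d1 Fd] [d2 Gd]; exists (d1 + d2)%N; apply: is_polyfun_deg_add.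
  apply: (@is_polyfun_deg_ext _ (fun m => F m * 1)) => [m|]; first by rewrite mulr1.
  exact: is_polyfun_deg_mul Fd (is_polyfun_deg_const _ _).
apply: (@is_polyfun_deg_ext _ (fun m => 1 * G m)) => [m|]; first by rewrite mul1r.
exact: is_polyfun_deg_mul (is_polyfun_deg_const _ _) Gd.
Qed.

Lemma is_polyfun_sum (I : eqType) (r : seq I) (P : pred I) (F : I -> _) :
  (forall i, P i -> is_polyfun (F i)) -> is_polyfun (fun m => \sum_(i <- r | P i) F i m).
Proof.
move=> Fp; elim: r => [|i r IH].
  by apply: is_polyfun_ext (is_polyfun_const 0) => m; rewrite big_nil.
have [Pi|nPi] := boolP (P i).
  by apply: is_polyfun_ext (is_polyfun_add (Fp i Pi) IH) => m; rewrite big_cons Pi.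
by apply: is_polyfun_ext IH => m; rewrite big_cons (negbTE nPi).
Qed.

Lemma is_polyfun_prod (I : eqType) (r : seq I) (F : I -> _) :
  (forall i, is_polyfun (F i)) -> is_polyfun (fun m => \prod_(i <- r) F i m).
Proof.
move=> Fp; elim: r => [|i r IH].
  by apply: is_polyfun_ext (is_polyfun_const 1) => m; rewrite big_nil.
by apply: is_polyfun_ext (is_polyfun_mul (Fp i) IH) => m; rewrite big_cons.
Qed.

Lemma is_polyfun_bin s j : s \in S -> is_polyfun (fun m => 'C(m s, j)%:R).
Proof.
move=> sS; apply: is_polyfun_ext (fun m => esym (natr_bin _ (m s) j)) _.
apply: is_polyfun_mul (is_polyfun_const _).
apply: is_polyfun_prod => i; apply: is_polyfun_add (is_polyfun_var sS) (is_polyfun_const _).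
Qed.

Definition pdelta s F : ('I_m0 -> nat) -> rat := fun m => F (upd m s (m s).+1) - F m.
Definition delta_vanishes_along D s F := forall m, delta_vanishes D (fun k => F (upd m s k)).
Definition depends_only_on (T : {set 'I_m0}) F := forall m m', {in T, m =1 m'} -> F m = F m'.

Lemma iter_pdelta_upd s F j m k :
  iter j (pdelta s) F (upd m s k) = iter j delta (fun k => F (upd m s k)) k.
Proof. by elim: j k m => //= j IH k m; rewrite /pdelta /delta upd_eq upd_upd !IH. Qed.

Lemma delta_vanishes_alongP D s F :
  delta_vanishes_along D s F <-> iter D (pdelta s) F =1 (fun _ => 0).
Proof.
split=> [F0 m | F0 m k]; last by rewrite -iter_pdelta_upd F0.
by rewrite -(upd_id m s) iter_pdelta_upd F0.
Qed.

Lemma pdelta_comm s t F : s != t -> pdelta t (pdelta s F) = pdelta s (pdelta t F).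
Proof.
move=> st; apply: functional_extensionality => m; rewrite /pdelta.
rewrite upd_neq // upd_neq 1?eq_sym // (upd_comm _ _ _ st); ring.
Qed.

Lemma iter_pdelta_upd_other s t H k m : t != s ->
  iter k (pdelta t) (fun m => H (upd m s 0%N)) m = iter k (pdelta t) H (upd m s 0%N).
Proof.
move=> ts; elim: k m => //= k IH m.
by rewrite /pdelta !IH upd_neq // (upd_comm _ _ _ ts).
Qed.

Lemma depends_only_on_pdelta (T : {set 'I_m0}) s F : s \in T ->
  depends_only_on T F -> depends_only_on T (pdelta s F).
Proof.
move=> sT Fdep m m' mm'; rewrite /pdelta (Fdep m m') // mm' //.
by congr (_ - _); apply: Fdep => i iT; rewrite /upd mm'.
Qed.

Lemma depends_only_on_iter_pdelta (T : {set 'I_m0}) s F j : s \in T ->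
  depends_only_on T F -> depends_only_on T (iter j (pdelta s) F).
Proof. by move=> sT Fdep; elim: j => //= j; apply: depends_only_on_pdelta. Qed.

Lemma is_polyfun_of_delta_vanishes D (T : {set 'I_m0}) F :
  T \subset S -> depends_only_on T F -> {in T, forall t, delta_vanishes_along D t F} ->
  is_polyfun F.
Proof.
move: {2}#|T| (erefl #|T|) => k; elim: k T F => [|k IH] T F cardT TS Fdep Fvan.
  apply: is_polyfun_ext (is_polyfun_const (F (fun _ => 0%N))) => m.
  by apply: Fdep => i; rewrite (cards0_eq cardT) inE.
have [s sT] : {s | s \in T} by apply/sigW/set0Pn; rewrite -card_gt0 cardT.
pose G j m := iter j (pdelta s) F (upd m s 0%N).
have newtonF m : F m = \sum_(j < D) 'C(m s, j)%:R * G j m.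
  rewrite -[in LHS](upd_id m s) (newton_forward_vanishes (Fvan s sT m)).
  by apply: eq_bigr => j _; rewrite mulr_natl /G iter_pdelta_upd.
apply: is_polyfun_ext (fun m => esym (newtonF m)) _.
apply: is_polyfun_sum => j _; apply: is_polyfun_mul (is_polyfun_bin _ (subsetP TS s sT)) _.
apply: (IH (T :\ s)).
- by move: (cardsD1 s T); rewrite sT cardT add1n => -[].
- exact: subset_trans (subsetDl _ _) TS.
- move=> m m' mm'; apply: (depends_only_on_iter_pdelta j sT Fdep) => i iT.
  by rewrite /upd; case: eqP => // /eqP i_s; apply: mm'; rewrite in_setD1 i_s.
- move=> t; rewrite in_setD1 => /andP[ts tT]; apply/delta_vanishes_alongP => m.
  rewrite /G iter_pdelta_upd_other // iter_commute => [|H]; last first.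
    by apply: pdelta_comm; rewrite eq_sym.
  have -> : iter D (pdelta t) F = fun _ => 0.
    by apply: functional_extensionality; apply/delta_vanishes_alongP/Fvan.
  by elim: (nat_of_ord j) (upd m s 0%N) => //= i IHi x; rewrite /pdelta !IHi subrr.
Qed.

End PolynomialFunctions.

Definition fill (m0 : nat) (S : {set 'I_m0}) (mfix m : 'I_m0 -> nat) i :=
  if i \in S then m i else mfix i.

Lemma incomparable_mass_fill_chain m0 (le0 : rel 'I_m0) S mfix m s :
  is_chain le0 S -> s \in S -> incomparable_mass le0 s (fill S mfix m) <= \sum_i mfix i.
Proof.
move=> chainS sS; rewrite /incomparable_mass big_mkcond /=; apply: leq_sum => j _.
case: ifP => // /andP[js sj]; rewrite /fill; case: ifP => // jS.
by move: (chainS j s jS sS); rewrite (negbTE js) (negbTE sj).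
Qed.

Lemma Lplus_polynomial_chain m0 (le0 : rel 'I_m0) S mfix :
  is_partial_order le0 -> is_chain le0 S -> Lplus_polynomial_in le0 S mfix.
Proof.
case=> _ [anti trans] chainS.
pose F m : rat := ((Lplus le0 (fill S mfix m))%:R)%R.
have [d [c Fc]] : is_polyfun S F.
  apply: (@is_polyfun_of_delta_vanishes _ S (\sum_i mfix i).+1 S) => // [m m' mm' | s sS m].
    by rewrite /F /fill; do 3 f_equal; apply: functional_extensionality => i; case: ifP => // /mm'.
  have -> : (fun k => F (upd m s k)) = Lplus_along le0 s (fill S mfix m).
    apply: functional_extensionality => k; rewrite /F /Lplus_along; do 3 f_equal.
    by apply: functional_extensionality => i; rewrite /fill /upd; case: eqP => [->|]; rewrite ?sS.
  apply: delta_vanishes_le (delta_vanishes_Lplus_along anti trans s _).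
  by rewrite ltnS incomparable_mass_fill_chain.
exists d, c => m m_fix; rewrite -Fc /F /fill; do 3 f_equal.
by apply: functional_extensionality => i; case: ifP => // /negbT /m_fix.
Qed.

Section LowerBound.
Variables (m0 : nat) (le0 : rel 'I_m0).
Hypotheses (le0_refl : reflexive le0) (le0_anti : antisymmetric le0)
  (le0_trans : transitive le0).
Implicit Types (m : 'I_m0 -> nat) (i j k : 'I_m0).

Lemma exists_maximal_block_above m k :
  0 < m k -> exists2 k', maximal_block le0 m k' & le0 k k'.
Proof.
move=> mk; pose above j := #|[set i | (0 < m i) && le0 j i]|.
have [k' /andP[mk' kk'] k'_min] :=
  @arg_minnP _ k (fun j => (0 < m j) && le0 k j) above (introT andP (conj mk (le0_refl k))).
exists k' => //; rewrite /maximal_block mk'; apply/forallP => j.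
apply/implyP => /andP[mj jk']; apply/negP => k'j.
have := k'_min j; rewrite mj (le0_trans kk' k'j) => /(_ isT); rewrite leqNgt => /negP; apply.
apply/proper_card/properP; split.
  by apply/subsetP => i; rewrite !inE => /andP[mi ji]; rewrite mi (le0_trans k'j ji).
exists k'; rewrite !inE ?mk' ?le0_refl //=.
by apply: contra jk' => jk'; apply/eqP/le0_anti; rewrite jk' k'j.
Qed.

Lemma mass_decr m k : 0 < m k -> \sum_j decr m k j < \sum_j m j.
Proof.
move=> mk; rewrite (bigD1 k) //= [X in _ < X](bigD1 k) //= {1}/decr upd_eq.
rewrite (eq_bigr m) => [|j jk]; last by rewrite /decr upd_neq.
by rewrite ltn_add2r ltn_predL.
Qed.

Lemma Lplus_decr_le m k : maximal_block le0 m k -> Lplus le0 (decr m k) <= Lplus le0 m.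
Proof.
move=> blk; rewrite [X in _ <= X](@Lplus_rec _ le0 m); last by exists k; case/andP: blk.
by rewrite (bigD1 k) //= leq_addr.
Qed.

Lemma Lplus_decr2_le m p q : p != q -> maximal_block le0 m p -> maximal_block le0 m q ->
  Lplus le0 (decr m p) + Lplus le0 (decr m q) <= Lplus le0 m.
Proof.
move=> pq blk_p blk_q; rewrite [X in _ <= X](@Lplus_rec _ le0 m); last first.
  by exists p; case/andP: blk_p.
by rewrite (bigD1 p) //= (bigD1 q) /= ?blk_q 1?eq_sym // addnA leq_addr.
Qed.

Lemma Lplus_gt0 m : 0 < Lplus le0 m.
Proof.
elim: (\sum_j m j).+1 {-2}m (ltnSn (\sum_j m j)) => // w IH {}m mw.
have [i mi | m0_eq] := pickP (fun i => 0 < m i); last first.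
  by rewrite Lplus_empty // => i; apply/eqP; rewrite -leqn0 leqNgt m0_eq.
have [k blk _] := exists_maximal_block_above mi.
apply: leq_trans (Lplus_decr_le blk); apply: IH.
by apply: leq_trans (mass_decr _) mw; case/andP: blk.
Qed.

Lemma maximal_block_self m p q : 0 < m p -> ~~ le0 p q ->
  (forall i, maximal_block le0 m i -> (i == p) || (i == q)) -> maximal_block le0 m p.
Proof.
move=> mp pq only_pq; have [k blk pk] := exists_maximal_block_above mp.
by case/orP: (only_pq k blk) => /eqP ek; subst k; rewrite ?pk in pq.
Qed.

(* While p and q are the only maximal blocks, removing the top of C_p or of C_q
   realizes Pascal's rule for 'C(m p + m q, m q). *)
Lemma binomial_le_Lplus m p q : ~~ le0 p q -> ~~ le0 q p ->
  'C(m p + m q, m q) <= Lplus le0 m.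
Proof.
move=> pq qp; have p_ne_q : p != q by apply: contraNneq pq => ->.
elim: (\sum_j m j).+1 {-2}m (ltnSn (\sum_j m j)) => // w IH {}m mw.
have IHdecr i : 0 < m i -> 'C(decr m i p + decr m i q, decr m i q) <= Lplus le0 (decr m i).
  by move=> mi; apply: IH; apply: leq_trans (mass_decr mi) mw.
have [mp0|mp] := posnP (m p); first by rewrite mp0 add0n binn Lplus_gt0.
have [mq0|mq] := posnP (m q); first by rewrite mq0 addn0 bin0 Lplus_gt0.
have [i /and3P[blk ip iq] | only_pq] :=
  pickP (fun i => [&& maximal_block le0 m i, i != p & i != q]).
  apply: leq_trans (Lplus_decr_le blk); have := IHdecr i (proj1 (andP blk)).
  by rewrite /decr !upd_neq // eq_sym.
have {}only_pq i : maximal_block le0 m i -> (i == p) || (i == q).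
  by move=> blk; move: (only_pq i); rewrite blk /= => /negbT; rewrite negb_and !negbK.
have blk_p := maximal_block_self mp pq only_pq.
have blk_q := maximal_block_self mq qp (fun i blk => etrans (orbC _ _) (only_pq i blk)).
apply: leq_trans (Lplus_decr2_le p_ne_q blk_p blk_q).
have q_ne_p : q != p by rewrite eq_sym.
move: (IHdecr p mp) (IHdecr q mq); rewrite /decr !upd_eq !upd_neq //.
case: (m p) mp => // a _; case: (m q) mq => // b _ /= Hp Hq.
by apply: leq_trans (leq_add Hp Hq); rewrite addSn binS addnS addSn.
Qed.

End LowerBound.

Lemma pow_le_ffact n k : n ^ k <= (n + k) ^_ k.
Proof.
by elim: k => // k IH; rewrite addnS ffactSS expnS (leq_mul (leqW (leq_addr _ _)) IH).
Qed.

Lemma pow_lt_binomial K E n : K * E.+1`! < n -> K * n ^ E < 'C(n + E.+1, E.+1).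
Proof.
move=> nK; rewrite ltnNge; apply/negP => bin_le.
have n_gt0 : 0 < n by apply: leq_ltn_trans nK.
have : n ^ E.+1 <= K * E.+1`! * n ^ E.
  apply: leq_trans (pow_le_ffact n E.+1) _; rewrite -bin_ffact mulnAC.
  exact: leq_mul bin_le (leqnn _).
by rewrite expnS leq_pmul2r ?expn_gt0 ?n_gt0 // leqNgt nK.
Qed.

Lemma not_chain_incomparable m0 (le0 : rel 'I_m0) S : ~ is_chain le0 S ->
  exists p q, [/\ p \in S, q \in S, ~~ le0 p q & ~~ le0 q p].
Proof.
move=> not_chain; pose incomparable (pq : 'I_m0 * 'I_m0) :=
  [&& pq.1 \in S, pq.2 \in S, ~~ le0 pq.1 pq.2 & ~~ le0 pq.2 pq.1].
have [[p q] /and4P[pS qS pq qp] | comparable] := pickP incomparable; first by exists p, q.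
case: not_chain => p q pS qS; move: (comparable (p, q)).
by rewrite /incomparable /= pS qS /= => /negbT; rewrite negb_and !negbK.
Qed.

Lemma poly_eval_le_pow m0 (S : {set 'I_m0}) d (c : {ffun {ffun 'I_m0 -> 'I_d.+1} -> rat})
    (m : 'I_m0 -> nat) n : 0 < n -> (forall i, i \in S -> m i <= n) ->
  (poly_eval S c m <= (\sum_e `|c e|) * n%:R ^+ (d * #|S|))%R.
Proof.
move=> n_gt0 mn; rewrite /poly_eval mulr_suml; apply: ler_sum => e _.
have prod_ge0 : (0 <= \prod_(i in S) (m i)%:R ^+ e i :> rat)%R.
  by apply: prodr_ge0 => i _; apply: exprn_ge0.
apply: le_trans (ler_wpM2r prod_ge0 (ler_norm _)) (ler_wpM2l (normr_ge0 _) _).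
rewrite exprM -prodr_const; apply: ler_prod => i iS; rewrite exprn_ge0 //=.
have n_ge1 : (1 <= n%:R :> rat)%R by rewrite ler1n.
apply: le_trans (lerXn2r _ _ _ _) (ler_weXn2l _ _); rewrite ?nnegrE ?ler_nat ?mn //.
by rewrite -ltnS ltn_ord.
Qed.

Lemma Lplus_not_polynomial m0 (le0 : rel 'I_m0) S mfix :
  is_partial_order le0 -> ~ is_chain le0 S -> ~ Lplus_polynomial_in le0 S mfix.
Proof.
case=> refl [anti trans] /not_chain_incomparable[p [q [pS qS pq qp]]] [d [c Lc]].
pose E := (d * #|S|)%N; pose K := Num.bound (\sum_e `|c e|).
pose n := ((K * E.+1`!).+1 + E)%N.
have n_gt0 : 0 < n by rewrite /n addSn.
pose m i := if i == p then n else if i == q then E.+1 else if i \in S then 0 else mfix i.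
have p_ne_q : p != q by apply: contraNneq pq => ->.
have m_fix i : i \notin S -> m i = mfix i.
  move=> iS; have [ip iq] : i != p /\ i != q by split; apply: contraNneq iS => ->.
  by rewrite /m (negbTE ip) (negbTE iq) (negbTE iS).
have m_le i : i \in S -> m i <= n.
  by move=> iS; rewrite /m iS; do 2 case: ifP => // _; rewrite /n addSn ltnS leq_addl.
have L_le : Lplus le0 m <= K * n ^ E.
  rewrite -(ler_nat rat) natrM natrX (Lc m m_fix).
  apply: le_trans (poly_eval_le_pow c n_gt0 m_le) (ler_wpM2r (exprn_ge0 _ _) _) => //.
  exact/ltW/archi_boundP/sumr_ge0.
have mp : m p = n by rewrite /m eqxx.
have mq : m q = E.+1 by rewrite /m eq_sym (negbTE p_ne_q) eqxx.
have := binomial_le_Lplus refl anti trans m pq qp; rewrite mp mq leqNgt.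
by rewrite (leq_ltn_trans L_le) // pow_lt_binomial // /n addSn ltnS leq_addr.
Qed.

Theorem theorem5p2 (m0 : nat) (le0 : rel 'I_m0) (S : {set 'I_m0}) :
  is_partial_order le0 ->
  (is_chain le0 S -> forall mfix : 'I_m0 -> nat, Lplus_polynomial_in le0 S mfix) /\
  (~ is_chain le0 S -> forall mfix : 'I_m0 -> nat, ~ Lplus_polynomial_in le0 S mfix).
Proof.
move=> po; split=> [chain | not_chain] mfix.
  exact: Lplus_polynomial_chain.
exact: Lplus_not_polynomial.
Qed.
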